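(* Consider a quantum data-syndrome code with $n$ qubits and $m$ measurement bits, set $N=2n+m$, and consider noise described by a set of channel supports $\Gamma\subseteq 2^{[N]}$ with channel distributions $(P_\gamma)_{\gamma\in\Gamma}$ and total error distribution $P$. Assume that for all $\gamma_1,\gamma_2\in\Gamma$ one has $\gamma_1\cup\gamma_2\in\Delta^{D}$, and assume $P_\gamma(0)>\tfrac12$ for all $\gamma\in\Gamma$. Then the total error distribution $P$ is identifiable from the syndrome statistics: if $(P'_\gamma)_{\gamma\in\Gamma}$ is any other family of channel distributions for the same $\Gamma$ with $P'_\gamma(0)>\tfrac12$ for all $\gamma$, whose total error distribution $P'$ induces the same distribution of syndromes as $P$, then $P'=P$.
   Context: Phase space representation: a Pauli operator on $n$ qubits (modulo phases) $X^{x_1}Z^{z_1}\otimes\cdots\otimes X^{x_n}Z^{z_n}$ is identified with $(x_1,\dots,x_n,z_1,\dots,z_n)\in\mathbb F_2^{2n}$. For $v=(x,z)\in\mathbb F_2^{2n}$ write $\overline v=(z,x)$ (swap of $X$- and $Z$-bits); two Pauli vectors $u,v$ commute iff $\overline u\cdot v=0$ (mod 2). A quantum data-syndrome code is given by pairwise commuting stabilizer generators $g^{(1)},\dots,g^{(l)}\in\mathbb F_2^{2n}$ (generating a stabilizer group not containing $-I$) and a classical code with generator matrix $G_C=[I_l\ A]\in\mathbb F_2^{l\times m}$, $A\in\mathbb F_2^{l\times(m-l)}$; for $i\in[m]$ let $f^{(i)}=\sum_{j=1}^l (G_C)_{j,i}\,g^{(j)}\in\mathbb F_2^{2n}$ (so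 $f^{(i)}=g^{(i)}$ for $i\le l$). Errors are vectors $e=(e_d,e_m)\in\mathbb F_2^{2n}\times\mathbb F_2^m=\mathbb F_2^N$, and the syndrome of $e$ is $\mathrm{syn}(e)\in\mathbb F_2^m$ with $\mathrm{syn}(e)_i=f^{(i)}\cdot\overline{e_d}+(e_m)_i$ (mod 2). Vectors in $\mathbb F_2^N$ are identified with their support sets in $[N]$. A noise model consists of a set $\Gamma\subseteq 2^{[N]}$ and, for each $\gamma\in\Gamma$, a probability distribution $P_\gamma$ on $\mathbb F_2^N$ with $P_\gamma(e)=0$ unless $\mathrm{supp}(e)\subseteq\gamma$; the total error distribution $P$ is the distribution of $\sum_{\gamma\in\Gamma}e_\gamma$ (sum in $\mathbb F_2^N$) where the $e_\gamma\sim P_\gamma$ are independent (the Boolean convolution of the $P_\gamma$). The syndrome statistics is the distribution of $\mathrm{syn}(e)$ for $e\sim P$. Define $\Delta^{D}=\{\gamma\subseteq[N]: \mathrm{syn}(e)\neq 0 \text{ for all nonzero } e\in\mathbb F_2^N \text{ with } \mathrm{supp}(e)\subseteq\gamma\}$. *)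

From HB Require Import structures.
From mathcomp Require Import all_boot all_order all_algebra.
From mathcomp Require Import reals.
Set Implicit Arguments. Unset Strict Implicit. Unset Printing Implicit Defensive.
Import Order.TTheory GRing.Theory Num.Theory.
Local Open Scope ring_scope.

(* Phase-space vectors of n qubits: (x_1..x_n, z_1..z_n) in F_2^(n+n). *)
Definition pbar (n : nat) (v : 'rV['F_2]_(n + n)) : 'rV['F_2]_(n + n) :=
  row_mx (rsubmx v) (lsubmx v).

Definition pairwise_commuting (n l : nat) (g : 'M['F_2]_(l, n + n)) : Prop :=
  forall i j : 'I_l, pbar (row i g) *m (row j g)^T = 0.

(* Code with generator matrix G_C = [I_l A], m = l + k measurement bits.
   f^(i) = sum_j (G_C)_{j,i} g^(j) : rows of G_C^T *m g. *)
Definition GC (l k : nat) (A : 'M['F_2]_(l, k)) : 'M['F_2]_(l, l + k) :=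
  row_mx 1%:M A.

Definition fmat (n l k : nat) (g : 'M['F_2]_(l, n + n)) (A : 'M['F_2]_(l, k))
  : 'M['F_2]_(l + k, n + n) := (GC A)^T *m g.

(* Errors e = (e_d, e_m) in F_2^N, N = (n+n) + (l+k). *)
Notation errT n l k := 'rV['F_2]_(n + n + (l + k)).

Definition syn (n l k : nat) (g : 'M['F_2]_(l, n + n)) (A : 'M['F_2]_(l, k))
  (e : errT n l k) : 'rV['F_2]_(l + k) :=
  pbar (lsubmx e) *m (fmat g A)^T + rsubmx e.

Definition supp (N : nat) (e : 'rV['F_2]_N) : {set 'I_N} :=
  [set i | e 0 i != 0].

Definition DeltaD (n l k : nat) (g : 'M['F_2]_(l, n + n)) (A : 'M['F_2]_(l, k))
  : {set {set 'I_(n + n + (l + k))}} :=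
  [set gam : {set _} | [forall e : errT n l k,
      ((e != 0) && (supp e \subset gam)) ==> (syn g A e != 0)]].

Definition channel_dist (R : realType) (N : nat) (gam : {set 'I_N})
  (p : {ffun 'rV['F_2]_N -> R}) : Prop :=
  [/\ forall e, 0 <= p e, \sum_e p e = 1
    & forall e, p e != 0 -> supp e \subset gam].

(* Boolean convolution (distribution of the sum of independent variables). *)
Definition bconv (R : realType) (N : nat) (p q : {ffun 'rV['F_2]_N -> R})
  : {ffun 'rV['F_2]_N -> R} :=
  [ffun e => \sum_a p a * q (e - a)].

Definition delta0 (R : realType) (N : nat) : {ffun 'rV['F_2]_N -> R} :=
  [ffun e => if e == 0 then 1 else 0].

Definition total_dist (R : realType) (N : nat) (Gam : {set {set 'I_N}})
  (P : {set 'I_N} -> {ffun 'rV['F_2]_N -> R}) : {ffun 'rV['F_2]_N -> R} :=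
  \big[@bconv R N/delta0 R N]_(gam in Gam) P gam.

Definition syndrome_stats (R : realType) (n l k : nat) (g : 'M['F_2]_(l, n + n))
  (A : 'M['F_2]_(l, k)) (P : {ffun errT n l k -> R}) : {ffun 'rV['F_2]_(l + k) -> R} :=
  [ffun s => \sum_(e | syn g A e == s) P e].

From HB Require Import structures.
From mathcomp Require Import all_boot all_order all_algebra.
From mathcomp Require Import lra reals exp.
Set Implicit Arguments. Unset Strict Implicit. Unset Printing Implicit Defensive.
Import Order.TTheory GRing.Theory Num.Theory.
Local Open Scope ring_scope.

(* Work with Walsh-Fourier transforms on F_2^N. Convolution becomes product,
   and a channel with P_gam(0) > 1/2 has a positive transform depending only
   on the coordinates in gam. Hence ln of the transform of the total
   distribution is a sum over Gam of gam-local functions, and the syndrome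
   statistics determine it on the image of the transposed syndrome matrix.
   The transform of a sum of gam-local functions is supported on vectors
   lying inside a single gam, and two such vectors with the same syndrome
   coincide because gam1 :|: gam2 is in Delta^D; so a sum of local functions
   vanishing on that image vanishes everywhere. Applied to the difference of
   the two log-transforms, this gives P' = P. *)

Lemma F2_cases (x : 'F_2) : x = 0 \/ x = 1.
Proof. by case: x => [[|[|//]]] ? /=; [left|right]; apply: val_inj. Qed.

Definition dot (N : nat) (u e : 'rV['F_2]_N) : 'F_2 := (u *m e^T) 0 0.

Definition local_on (T : Type) (N : nat) (gam : {set 'I_N}) (p : 'rV['F_2]_N -> T) :=
  forall u u' : 'rV['F_2]_N, (forall i, i \in gam -> u 0 i = u' 0 i) -> p u = p u'.

Section Dot.
Variable N : nat.
Implicit Types u e a b : 'rV['F_2]_N.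

Lemma dotE u e : dot u e = \sum_j u 0 j * e 0 j.
Proof. by rewrite /dot mxE; apply: eq_bigr => j _; rewrite mxE. Qed.

Lemma dotC u e : dot u e = dot e u.
Proof. by rewrite /dot -[u *m _]trmxK trmx_mul trmxK mxE. Qed.

Lemma dotDr u a b : dot u (a + b) = dot u a + dot u b.
Proof. by rewrite /dot linearD mulmxDr mxE. Qed.

Lemma dotNr u a : dot u (- a) = - dot u a.
Proof. by rewrite /dot linearN mulmxN mxE. Qed.

Lemma dot0r u : dot u 0 = 0.
Proof. by rewrite /dot trmx0 mulmx0 mxE. Qed.

Lemma dot_delta i e : dot (delta_mx 0 i) e = e 0 i.
Proof.
rewrite dotE (bigD1 i) //= big1 ?addr0 => [|j ji]; first by rewrite mxE !eqxx mul1r.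
by rewrite mxE (negbTE ji) andbF mul0r.
Qed.

Lemma dot_mulmx m (M : 'M['F_2]_(N, m)) (t : 'rV_m) e :
  dot t (e *m M) = dot (t *m M^T) e.
Proof. by rewrite /dot trmx_mul mulmxA. Qed.

Lemma dot_local (gam : {set 'I_N}) e :
  supp e \subset gam -> local_on gam (fun u => dot u e).
Proof.
move=> /subsetP se u u' uu'; rewrite !dotE; apply: eq_bigr => j _.
have [jg|jg] := boolP (j \in gam); first by rewrite uu'.
have : j \notin supp e by apply: contra jg; apply: se.
by rewrite inE negbK => /eqP ->; rewrite !mulr0.
Qed.

Lemma supp_eq0 e : (supp e == set0) = (e == 0).
Proof.
apply/eqP/eqP => [se0|->]; last by apply/setP => i; rewrite !inE mxE eqxx.
apply/rowP => i; apply/eqP; rewrite mxE.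
by apply: contraT => ei; rewrite -(in_set0 i) -se0 inE.
Qed.

Lemma suppB a b : supp (b - a) \subset supp b :|: supp a.
Proof.
apply/subsetP => i; rewrite !inE mxE; apply: contraR.
by rewrite negb_or !negbK mxE => /andP [/eqP -> /eqP ->]; rewrite oppr0 addr0.
Qed.

End Dot.

Section Fourier.
Variables (R : numDomainType) (N : nat).
Implicit Types (u e a b : 'rV['F_2]_N) (p : 'rV['F_2]_N -> R).

Definition chi u e : R := if dot u e == 0 then 1 else -1.

Definition fourier p u : R := \sum_e p e * chi u e.

Lemma chi0 u : chi u 0 = 1.
Proof. by rewrite /chi dot0r eqxx. Qed.

Lemma chiC u e : chi u e = chi e u.
Proof. by rewrite /chi dotC. Qed.

Lemma chi_sign u e : chi u e = 1 \/ chi u e = -1.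
Proof. by rewrite /chi; case: ifP; [left|right]. Qed.

Lemma chiD u a b : chi u (a + b) = chi u a * chi u b.
Proof.
rewrite /chi dotDr.
by case: (F2_cases (dot u a)) => ->; case: (F2_cases (dot u b)) => -> /=;
  rewrite ?mulrNN ?mulr1 ?mul1r.
Qed.

Lemma chiB u a b : chi u (a - b) = chi u a * chi u b.
Proof. by rewrite chiD /chi dotNr oppr_eq0. Qed.

Lemma chiDl u v e : chi (u + v) e = chi u e * chi v e.
Proof. by rewrite chiC chiD !(chiC e). Qed.

Lemma chi_delta i e : e 0 i != 0 -> chi (delta_mx 0 i) e = -1.
Proof. by rewrite /chi dot_delta => /negbTE ->. Qed.

Lemma sumr_antiperiodic (F : 'rV['F_2]_N -> R) v :
  (forall u, F (v + u) = - F u) -> \sum_u F u = 0.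
Proof.
move=> FN; apply/eqP; rewrite -eqNr; apply/eqP.
by rewrite {2}(reindex_inj (addrI v)) /= -sumrN; apply: eq_bigr => u _; rewrite FN.
Qed.

Definition card_rV : R := #|{: 'rV['F_2]_N}|%:R.

Lemma card_rV_neq0 : card_rV != 0.
Proof. by rewrite pnatr_eq0 -lt0n; apply/card_gt0P; exists 0. Qed.

Lemma sum_chi e : \sum_u chi u e = if e == 0 then card_rV else 0.
Proof.
have [->|e0] := eqVneq e 0.
  by rewrite (eq_bigr (fun _ => 1)) ?sumr_const // => u _; rewrite chi0.
have [i] : exists i, i \in supp e by apply/set0Pn; rewrite supp_eq0.
rewrite inE => ei /=; apply: (@sumr_antiperiodic (chi^~ e) (delta_mx 0 i)) => u.
by rewrite chiDl chi_delta // mulN1r.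
Qed.

Lemma fourier_inversion p u : \sum_b fourier p b * chi u b = card_rV * p u.
Proof.
transitivity (\sum_e p e * \sum_b chi b (e - u)).
  under eq_bigr => b _ do rewrite /fourier mulr_suml.
  rewrite exchange_big; apply: eq_bigr => e _; rewrite mulr_sumr.
  by apply: eq_bigr => b _; rewrite chiB (chiC u) mulrA.
rewrite (bigD1 u) //= subrr sum_chi eqxx big1 ?addr0 1?mulrC // => e eu.
by rewrite sum_chi subr_eq0 (negbTE eu) mulr0.
Qed.

Lemma fourier_inj p q : fourier p =1 fourier q -> p =1 q.
Proof.
move=> pq x; apply: (mulfI card_rV_neq0); rewrite -!fourier_inversion.
by apply: eq_bigr => b _; rewrite pq.
Qed.

Lemma fourier_sum (I : Type) (r : seq I) (P : pred I) (f : I -> 'rV['F_2]_N -> R) u :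
  fourier (fun e => \sum_(i <- r | P i) f i e) u = \sum_(i <- r | P i) fourier (f i) u.
Proof.
rewrite /fourier; under eq_bigr => e _ do rewrite mulr_suml.
by rewrite exchange_big.
Qed.

Lemma fourier_local_supp (gam : {set 'I_N}) p a :
  local_on gam p -> fourier p a != 0 -> supp a \subset gam.
Proof.
move=> pl; apply: contraR => /subsetPn [i]; rewrite inE => ai ig.
apply/eqP/(@sumr_antiperiodic (fun u => p u * chi a u) (delta_mx 0 i)) => u.
rewrite chiD (chiC a) chi_delta // mulN1r mulrN; congr (- (_ * _)).
apply: pl => j jg; have /negbTE ji : j != i by apply: contraNneq ig => <-.
by rewrite !mxE ji andbF add0r.
Qed.

End Fourier.

Section DualDetermination.
Variables (R : numDomainType) (N m : nat) (M : 'M['F_2]_(N, m)).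
Variable Gam : {set {set 'I_N}}.
Hypothesis ker_pairs : forall gam1 gam2, gam1 \in Gam -> gam2 \in Gam ->
  forall e, supp e \subset gam1 :|: gam2 -> e *m M = 0 -> e = 0.

Lemma chi_mulmx (t : 'rV_m) (e : 'rV_N) : chi R t (e *m M) = chi R (t *m M^T) e.
Proof. by rewrite /chi dot_mulmx. Qed.

Lemma fourier_eq0_of_dual (F : 'rV['F_2]_N -> R) :
  (forall a, fourier F a != 0 -> exists2 gam, gam \in Gam & supp a \subset gam) ->
  (forall t : 'rV_m, F (t *m M^T) = 0) -> forall a, fourier F a = 0.
Proof.
move=> Floc F0 a; apply/eqP/contraT => Fa; have [gam1 gam1G sa] := Floc a Fa.
have dual0 : \sum_b fourier F b * \sum_(t : 'rV_m) chi R t ((b - a) *m M) = 0.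
  under eq_bigr => b _ do rewrite mulr_sumr.
  rewrite exchange_big big1 // => t _.
  under eq_bigr => b _ do rewrite chi_mulmx chiB mulrA.
  by rewrite -mulr_suml fourier_inversion F0 mulr0 mul0r.
(* Only b = a survives: b - a would be a nonzero kernel vector inside gam2 :|: gam1. *)
have : \sum_b fourier F b * \sum_(t : 'rV_m) chi R t ((b - a) *m M)
    = fourier F a * card_rV R m.
  rewrite (bigD1 a) //= subrr mul0mx sum_chi eqxx big1 ?addr0 // => b ba.
  rewrite sum_chi; case: eqP => [baM|]; last by rewrite mulr0.
  have [->|Fb] := eqVneq (fourier F b) 0; first by rewrite mul0r.
  have [gam2 gam2G sb] := Floc b Fb.
  suff /eqP : b - a = 0 by rewrite subr_eq0 (negbTE ba).
  exact: ker_pairs gam2G gam1G _ (subset_trans (suppB a b) (setUSS sb sa)) baM.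
by rewrite dual0 => /esym/eqP; rewrite mulf_eq0 (negbTE (card_rV_neq0 _ _)) orbF (negbTE Fa).
Qed.

Lemma sum_local_eq0_of_dual (f : {set 'I_N} -> 'rV['F_2]_N -> R) :
  (forall gam, gam \in Gam -> local_on gam (f gam)) ->
  (forall t : 'rV_m, \sum_(gam in Gam) f gam (t *m M^T) = 0) ->
  forall u, \sum_(gam in Gam) f gam u = 0.
Proof.
move=> floc f0; apply: (@fourier_inj _ _ _ (fun=> 0)) => a.
rewrite [RHS]big1 => [|e _]; last by rewrite mul0r.
apply: fourier_eq0_of_dual f0 a => {}a; rewrite fourier_sum => Fa.
have /exists_inP [gam gamG fa] : [exists gam in Gam, fourier (f gam) a != 0].
  apply: contraNT Fa => /exists_inPn fa0; apply/eqP/big1 => gam gamG.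
  by apply/eqP; rewrite -[_ == 0]negbK fa0.
by exists gam => //; apply: fourier_local_supp (floc _ gamG) fa.
Qed.

End DualDetermination.

Lemma ln_prod (R : realType) (I : Type) (r : seq I) (P : pred I) (F : I -> R) :
  (forall i, P i -> 0 < F i) ->
  ln (\prod_(i <- r | P i) F i) = \sum_(i <- r | P i) ln (F i).
Proof.
move=> F_gt0; suff [] : 0 < \prod_(i <- r | P i) F i /\
    ln (\prod_(i <- r | P i) F i) = \sum_(i <- r | P i) ln (F i) by [].
apply: (big_rec2 (fun x y => 0 < x /\ ln x = y)); first by rewrite ln1.
move=> i x y Pi [x_gt0 <-]; split; first by rewrite mulr_gt0 ?F_gt0.
by rewrite lnM // posrE ?F_gt0.
Qed.

Section Channels.
Variables (R : realType) (N : nat).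
Implicit Types (gam : {set 'I_N}) (p q : {ffun 'rV['F_2]_N -> R}).

Lemma fourier_bconv p q u : fourier (bconv p q) u = fourier p u * fourier q u.
Proof.
rewrite /fourier /bconv; under eq_bigr => e _ do rewrite ffunE mulr_suml.
rewrite exchange_big mulr_suml; apply: eq_bigr => a _.
rewrite (reindex_inj (addIr a)) mulr_sumr; apply: eq_bigr => x _.
by rewrite addrK chiD [chi R u x * _]mulrC mulrACA.
Qed.

Lemma fourier_delta0 u : fourier (delta0 R N) u = 1.
Proof.
rewrite /fourier (bigD1 0) //= big1 => [|e e0]; first by rewrite ffunE eqxx mul1r chi0 addr0.
by rewrite ffunE (negbTE e0) mul0r.
Qed.

Lemma fourier_total_dist (Gam : {set {set 'I_N}}) (P : {set 'I_N} -> {ffun 'rV['F_2]_N -> R}) u :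
  fourier (total_dist Gam P) u = \prod_(gam in Gam) fourier (P gam) u.
Proof.
apply: (big_morph (fun p : {ffun 'rV['F_2]_N -> R} => fourier p u)).
  by move=> p q; rewrite fourier_bconv.
exact: fourier_delta0.
Qed.

Lemma fourier_channel_local gam p : channel_dist gam p -> local_on gam (fourier p).
Proof.
case=> _ _ psupp u u' uu'; apply: eq_bigr => e _.
have [->|/psupp se] := eqVneq (p e) 0; first by rewrite !mul0r.
by rewrite /chi (dot_local se uu').
Qed.

Lemma fourier_channel_gt0 gam p u :
  channel_dist gam p -> 1 / 2 < p 0 -> 0 < fourier p u.
Proof.
case=> p_ge0 p_sum1 _ p0_gt.
have p_neq0_sum : \sum_(e | e != 0) p e = 1 - p 0.
  by rewrite -p_sum1 [in RHS](bigD1 0) //= addrAC subrr add0r.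
suff : p 0 - (1 - p 0) <= fourier p u by apply: lt_le_trans; lra.
rewrite /fourier (bigD1 0) //= chi0 mulr1 lerD2l -p_neq0_sum -sumrN.
apply: ler_sum => e _; have := p_ge0 e.
by case: (chi_sign R u e) => ->; rewrite ?mulr1 ?mulrN1; lra.
Qed.

Variables (Gam : {set {set 'I_N}}) (P : {set 'I_N} -> {ffun 'rV['F_2]_N -> R}).
Hypothesis chP : forall gam, gam \in Gam -> channel_dist gam (P gam).
Hypothesis P0_gt : forall gam, gam \in Gam -> 1 / 2 < P gam 0.

Lemma fourier_total_dist_gt0 u : 0 < fourier (total_dist Gam P) u.
Proof.
rewrite fourier_total_dist; apply: prodr_gt0 => gam gamG.
exact: fourier_channel_gt0 (chP gamG) (P0_gt gamG).
Qed.

Lemma ln_fourier_total_dist u :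
  ln (fourier (total_dist Gam P) u) = \sum_(gam in Gam) ln (fourier (P gam) u).
Proof.
rewrite fourier_total_dist ln_prod // => gam gamG.
exact: fourier_channel_gt0 (chP gamG) (P0_gt gamG).
Qed.

End Channels.

Definition pbar_mx (n : nat) : 'M['F_2]_(n + n) := row_mx (col_mx 0 1%:M) (col_mx 1%:M 0).

Lemma pbarE n (v : 'rV['F_2]_(n + n)) : pbar v = v *m pbar_mx n.
Proof.
by rewrite /pbar -[v in RHS]hsubmxK mul_mx_row !mul_row_col !mulmx0 !mulmx1 addr0 add0r.
Qed.

Section Syndrome.
Variables (n l k : nat) (g : 'M['F_2]_(l, n + n)) (A : 'M['F_2]_(l, k)).

Definition syn_mx : 'M['F_2]_(n + n + (l + k), l + k) :=
  col_mx (pbar_mx n *m (fmat g A)^T) 1%:M.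

Lemma synE e : syn g A e = e *m syn_mx.
Proof. by rewrite /syn -[e in RHS]hsubmxK mul_row_col mulmx1 pbarE mulmxA. Qed.

Lemma fourier_syndrome_stats (R : realType) (p : {ffun errT n l k -> R}) t :
  fourier (syndrome_stats g A p) t = fourier p (t *m syn_mx^T).
Proof.
rewrite /fourier (partition_big (syn g A) xpredT) //=; apply: eq_bigr => s _.
rewrite ffunE mulr_suml; apply: eq_bigr => e /eqP <-.
by rewrite synE chi_mulmx.
Qed.

Lemma DeltaD_ker gam e :
  gam \in DeltaD g A -> supp e \subset gam -> e *m syn_mx = 0 -> e = 0.
Proof.
rewrite inE => /forallP/(_ e) + se syn0.
by rewrite se andbT synE syn0 eqxx implybF negbK => /eqP.
Qed.

End Syndrome.

Theorem theorem10 (R : realType) (n l k : nat)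
  (g : 'M['F_2]_(l, n + n)) (A : 'M['F_2]_(l, k))
  (Gam : {set {set 'I_(n + n + (l + k))}})
  (P P' : {set 'I_(n + n + (l + k))} -> {ffun 'rV['F_2]_(n + n + (l + k)) -> R}) :
  pairwise_commuting g ->
  (forall gam, gam \in Gam -> channel_dist gam (P gam)) ->
  (forall gam1 gam2, gam1 \in Gam -> gam2 \in Gam -> gam1 :|: gam2 \in DeltaD g A) ->
  (forall gam, gam \in Gam -> 1 / 2 < P gam 0) ->
  (forall gam, gam \in Gam -> channel_dist gam (P' gam)) ->
  (forall gam, gam \in Gam -> 1 / 2 < P' gam 0) ->
  syndrome_stats g A (total_dist Gam P') = syndrome_stats g A (total_dist Gam P) ->
  total_dist Gam P' = total_dist Gam P.
Proof.
move=> _ chP DeltaP P0_gt chP' P'0_gt same_stats.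
pose f gam u := ln (fourier (P' gam) u) - ln (fourier (P gam) u).
have sum_f u : \sum_(gam in Gam) f gam u =
    ln (fourier (total_dist Gam P') u) - ln (fourier (total_dist Gam P) u).
  by rewrite sumrB (ln_fourier_total_dist chP' P'0_gt) (ln_fourier_total_dist chP P0_gt).
have f_local gam : gam \in Gam -> local_on gam (f gam).
  move=> gamG u u' uu'; rewrite /f.
  by rewrite (fourier_channel_local (chP _ gamG) uu') (fourier_channel_local (chP' _ gamG) uu').
have ker_pairs gam1 gam2 : gam1 \in Gam -> gam2 \in Gam -> forall e,
    supp e \subset gam1 :|: gam2 -> e *m syn_mx g A = 0 -> e = 0.
  by move=> gam1G gam2G e; apply/DeltaD_ker/DeltaP.
have f0 := sum_local_eq0_of_dual ker_pairs f_local.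
apply/ffunP/fourier_inj => u; apply: ln_inj; rewrite ?posrE ?fourier_total_dist_gt0 //.
apply/eqP; rewrite -subr_eq0 -sum_f f0 // => t.
by rewrite sum_f -!fourier_syndrome_stats same_stats subrr.
Qed.
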